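(* Let $n$ be a non-negative integer and let $a,b$ be integers with $\gcd(a,b)=1$, $b\neq 0$ and $b\neq\pm1$. Let $C_k=\frac{1}{k+1}\binom{2k}{k}$ be the $k$-th Catalan number and let $M_N(a,b)=\sum_{k=0}^{\lfloor N/2\rfloor}\binom{N}{2k}C_k a^k b^{N-2k}$ be the generalized Motzkin number. Then $$\omega_b\big(M_{2n}(a,b)\big)=\omega_b(C_n),\qquad \omega_b\big(M_{2n+1}(a,b)\big)=1+\omega_b\big((2n+1)C_n\big).$$
   Context: For an integer $x$ with $x\neq 0,\pm1$ and a nonzero integer $y$, $\omega_x(y)$ denotes the largest non-negative integer $e$ such that $x^e$ divides $y$. *)

From HB Require Import structures.
From mathcomp Require Import all_boot all_order all_algebra.
Set Implicit Arguments. Unset Strict Implicit. Unset Printing Implicit Defensive.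
Import Order.TTheory GRing.Theory Num.Theory.
Local Open Scope ring_scope.

Definition catalan (k : nat) : nat := ('C(2 * k, k) %/ k.+1)%N.

Definition motzkin (N : nat) (a b : int) : int :=
  \sum_(k < N./2.+1) ('C(N, 2 * k))%:Z * (catalan k)%:Z * a ^+ k * b ^+ (N - 2 * k).

(* omega_x(y): the largest e >= 0 with x^e | y. For |x| >= 2 and y <> 0 any such e
   satisfies e <= |y|, so the maximum over e < |y|+1 is the largest one. *)
Definition omega (x y : int) : nat :=
  (\max_(e < `|y|%N.+1 | (x ^+ e %| y)%Z) (e : nat))%N.

From HB Require Import structures.
From mathcomp Require Import all_boot all_order all_algebra.
From mathcomp Require Import zify ring.
Import Order.TTheory GRing.Theory Num.Theory.

(* Split M_N(a, b) into its top term L and the rest.  For N = 2n, L = C_n a^n; for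
   N = 2n + 1, L = (2n + 1) C_n a^n b.  Since a is prime to b, the b-adic valuation of
   L is the one claimed, so it suffices that b^(omega_b(L) + 1) divides every other
   term.  For k < n and j = n - k the identity
     C(2n, 2k) C_k C(2j, j) = C_n C(n, k) C(n + 1, k + 1)
   (and its analogue with (2n + 1) C_n and (2j + 1) C(2j, j)) shows that the term of
   index k is divisible by C_n up to the cofactor (2j + 1) C(2j, j).  By Legendre's
   formula no p-adic valuation of that cofactor exceeds 2j - 1, and the factor
   b^(2j) of the term more than compensates for it, prime by prime. *)

Section Valuations.

Local Set Implicit Arguments.
Local Unset Strict Implicit.

Lemma ltn_succ_exp2 m : 1 < m -> m.+1 < 2 ^ m.
Proof.
case: m => // m m_gt0; rewrite expnS.
have := ltn_expl m (isT : 1 < 2); lia.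
Qed.

Lemma leq_div_double_succ j q : 0 < q -> (2 * j).+1 %/ q <= 2 * (j %/ q) + 1.
Proof.
move=> q_gt0; rewrite -ltnS ltn_divLR //.
have := ltn_ceil j q_gt0; nia.
Qed.

Lemma sum_div_pow_widen p n m M : 0 < p -> n < p ^ m -> m <= M ->
  \sum_(1 <= i < m) n %/ p ^ i = \sum_(1 <= i < M) n %/ p ^ i.
Proof.
move=> p_gt0 n_lt mM; rewrite (big_nat_widen _ _ _ _ _ mM) big_mkcond /=.
apply: eq_bigr => i _; case: ltnP => // mi.
by rewrite divn_small // (leq_trans n_lt) // leq_pexp2l.
Qed.

Lemma logn_fact_trunc p n m : prime p -> n < p ^ m ->
  logn p n`! = \sum_(1 <= i < m) n %/ p ^ i.
Proof.
move=> p_pr n_lt; have p_gt0 := prime_gt0 p_pr.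
rewrite logn_fact // (sum_div_pow_widen p_gt0 n_lt (leq_maxl m n.+1)).
apply: (sum_div_pow_widen p_gt0 _ (leq_maxr _ _)).
exact: leq_trans (ltn_expl n (prime_gt1 p_pr)) (leq_pexp2l p_gt0 (leqnSn n)).
Qed.

Lemma logn_fact_double_succ p j : prime p -> 0 < j ->
  logn p (2 * j).+1`! <= 2 * logn p j`! + (2 * j).-1.
Proof.
move=> p_pr j_gt0.
have lt_pow : (2 * j).+1 < p ^ (2 * j).
  apply: leq_trans (ltn_succ_exp2 _) _; first by lia.
  by rewrite leq_exp2r ?prime_gt1 //; lia.
rewrite !(logn_fact_trunc (m := 2 * j)) //; last by lia.
rewrite big_distrr /= -[(2 * j).-1]muln1 -[(2 * j).-1]subn1 -sum_nat_const_nat.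
rewrite -big_split /=; apply: leq_sum => i _.
by rewrite leq_div_double_succ // expn_gt0 prime_gt0.
Qed.

Lemma bin_central_fact j : 'C(2 * j, j) * (j`! * j`!) = (2 * j)`!.
Proof. by have := bin_fact (leq_addl j j); rewrite addKn addnn -mul2n. Qed.

Lemma logn_mul_central_bin p j : prime p -> 0 < j ->
  logn p ((2 * j).+1 * 'C(2 * j, j)) <= (2 * j).-1.
Proof.
move=> p_pr j_gt0.
have fact_eq : (2 * j).+1 * 'C(2 * j, j) * (j`! * j`!) = (2 * j).+1`!.
  by rewrite factS -bin_central_fact; ring.
have := logn_fact_double_succ p_pr j_gt0.
rewrite -fact_eq !lognM ?muln_gt0 ?bin_gt0 ?fact_gt0 ?leq_pmull //; lia.
Qed.

Lemma dvdn_logn m N : 0 < m -> 0 < N ->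
  (forall p, prime p -> logn p m <= logn p N) -> m %| N.
Proof.
move=> m_gt0 N_gt0 le_logn; apply/dvdn_partP => // p.
rewrite mem_primes => /andP[p_pr _].
by rewrite p_part pfactor_dvdn // le_logn.
Qed.

Lemma dvdn_swap_cofactor B T D e m : 0 < B -> 0 < T -> 0 < D ->
  (forall p, prime p -> logn p D <= m) ->
  B ^ e %| T * D -> B ^ e.+1 %| T * B ^ m.+1.
Proof.
move=> B_gt0 T_gt0 D_gt0 le_logD dvd_TD.
apply: dvdn_logn; rewrite ?muln_gt0 ?expn_gt0 ?B_gt0 ?T_gt0 // => p p_pr.
have TD_gt0 : 0 < T * D by rewrite muln_gt0 T_gt0 D_gt0.
have := dvdn_leq_log p TD_gt0 dvd_TD.
have := le_logD p p_pr.
rewrite !lognM ?expn_gt0 ?B_gt0 // !lognX.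
case: (logn p B) => [|s]; nia.
Qed.

Lemma catalan_mul_succ k : catalan k * k.+1 = 'C(2 * k, k).
Proof.
rewrite /catalan divnK //; apply/dvdnP; exists ('C(2 * k, k) - 'C(2 * k, k.+1)).
have := mul_bin_diag (2 * k) k; have := mul_bin_down (2 * k) k.
rewrite (_ : 2 * k - k = k); nia.
Qed.

Lemma catalan_gt0 k : 0 < catalan k.
Proof.
have : 0 < 'C(2 * k, k) by rewrite bin_gt0 leq_pmull.
by rewrite -catalan_mul_succ muln_gt0 => /andP[].
Qed.

Lemma catalan_fact k : catalan k * (k`! * k.+1`!) = (2 * k)`!.
Proof. by rewrite -bin_central_fact -catalan_mul_succ factS; ring. Qed.

Lemma catalan_bin_central n k : k <= n ->
  'C(2 * n, 2 * k) * catalan k * 'C(2 * (n - k), n - k) =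
  catalan n * ('C(n, k) * 'C(n.+1, k.+1)).
Proof.
move=> le_kn; set j := n - k.
have F_gt0 : 0 < k`! * k.+1`! * (j`! * j`!) by rewrite !muln_gt0 !fact_gt0.
apply/eqP; rewrite -(eqn_pmul2r F_gt0); apply/eqP.
have bin_n : 'C(n, k) * (k`! * j`!) = n`! := bin_fact le_kn.
have bin_nS : 'C(n.+1, k.+1) * (k.+1`! * j`!) = n.+1`!.
  by have := @bin_fact n.+1 k.+1 le_kn; rewrite subSS.
have bin_2n : 'C(2 * n, 2 * k) * ((2 * k)`! * (2 * j)`!) = (2 * n)`!.
  by rewrite (_ : 2 * j = 2 * n - 2 * k) ?bin_fact ?leq_mul2l ?le_kn //; lia.
transitivity (2 * n)`!.
  by rewrite -bin_2n -catalan_fact -bin_central_fact; ring.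
by rewrite -catalan_fact -bin_n -bin_nS; ring.
Qed.

Lemma catalan_bin_central_odd n k : k <= n ->
  'C((2 * n).+1, 2 * k) * catalan k * ((2 * (n - k)).+1 * 'C(2 * (n - k), n - k)) =
  (2 * n).+1 * catalan n * ('C(n, k) * 'C(n.+1, k.+1)).
Proof.
move=> le_kn.
have bin_odd : 'C((2 * n).+1, 2 * k) * (2 * (n - k)).+1 = (2 * n).+1 * 'C(2 * n, 2 * k).
  by rewrite mul_bin_down mulnC (_ : (2 * n).+1 - 2 * k = (2 * (n - k)).+1) //; lia.
transitivity ((2 * n).+1 * 'C(2 * n, 2 * k) * catalan k * 'C(2 * (n - k), n - k)).
  by rewrite -bin_odd; ring.
by rewrite -[RHS]mulnA -catalan_bin_central //; ring.
Qed.

Lemma dvdn_motzkin_coef_even B e n k : 0 < B -> k < n -> B ^ e %| catalan n ->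
  B ^ e.+1 %| 'C(2 * n, 2 * k) * catalan k * B ^ (2 * n - 2 * k).
Proof.
move=> B_gt0 lt_kn dvd_cat; set j := n - k.
have j_gt0 : 0 < j by rewrite subn_gt0.
rewrite (_ : 2 * n - 2 * k = (2 * j).-1.+1); last by lia.
apply: (dvdn_swap_cofactor (D := 'C(2 * j, j))) => //.
- by rewrite muln_gt0 catalan_gt0 bin_gt0 andbT leq_mul2l (ltnW lt_kn) orbT.
- by rewrite bin_gt0 leq_pmull.
- move=> p p_pr; apply: leq_trans (logn_mul_central_bin p_pr j_gt0).
  by apply: dvdn_leq_log; rewrite ?muln_gt0 ?bin_gt0 ?leq_pmull ?dvdn_mull.
- by rewrite (catalan_bin_central (ltnW lt_kn)) dvdn_mulr.
Qed.

Lemma dvdn_motzkin_coef_odd B e n k : 0 < B -> k < n ->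
  B ^ e %| (2 * n).+1 * catalan n ->
  B ^ e.+2 %| 'C((2 * n).+1, 2 * k) * catalan k * B ^ ((2 * n).+1 - 2 * k).
Proof.
move=> B_gt0 lt_kn dvd_cat; set j := n - k.
have j_gt0 : 0 < j by rewrite subn_gt0.
rewrite (_ : (2 * n).+1 - 2 * k = (2 * j).-1.+2); last by lia.
rewrite expnSr [B ^ (2 * j).-1.+2]expnSr mulnA dvdn_pmul2r //.
apply: (dvdn_swap_cofactor (D := (2 * j).+1 * 'C(2 * j, j))) => //.
- by rewrite muln_gt0 catalan_gt0 bin_gt0 andbT; lia.
- by rewrite muln_gt0 bin_gt0 leq_pmull.
- by move=> p p_pr; apply: logn_mul_central_bin.
- by rewrite (catalan_bin_central_odd (ltnW lt_kn)) dvdn_mulr.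
Qed.

End Valuations.

Local Open Scope ring_scope.

Section Omega.

Variable b : int.
Hypothesis b_gt1 : (1 < `|b|)%N.

Local Set Implicit Arguments.
Local Unset Strict Implicit.

Lemma dvdz_exp_leq (e : nat) (y : int) : y != 0 -> (b ^+ e %| y)%Z -> (e <= `|y|)%N.
Proof.
move=> y_neq0; rewrite dvdzE abszX => /dvdn_leq; rewrite absz_gt0 => /(_ y_neq0).
by apply: leq_trans; apply: ltnW; apply: ltn_expl.
Qed.

Lemma omega_exact (y : int) (e : nat) : y != 0 ->
  (b ^+ e %| y)%Z -> ~~ (b ^+ e.+1 %| y)%Z -> omega b y = e.
Proof.
move=> y_neq0 dvd_e ndvd_eS; apply/eqP; rewrite eqn_leq; apply/andP; split.
  apply/bigmax_leqP => i dvd_i; rewrite leqNgt; apply: contra ndvd_eS => lt_ei.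
  exact: dvdz_trans (dvdz_exp2l _ lt_ei) dvd_i.
have lt_e : (e < `|y|.+1)%N by rewrite ltnS dvdz_exp_leq.
exact: (@leq_bigmax_cond _ _ _ (Ordinal lt_e)).
Qed.

Lemma dvdz_omega (y : int) : y != 0 ->
  (b ^+ omega b y %| y)%Z /\ ~~ (b ^+ (omega b y).+1 %| y)%Z.
Proof.
move=> y_neq0.
have ex_dvd : exists e, (b ^+ e %| y)%Z by exists 0%N; rewrite expr0 dvd1z.
have [e dvd_e max_e] := ex_maxnP ex_dvd (fun e => dvdz_exp_leq y_neq0).
have ndvd_eS : ~~ (b ^+ e.+1 %| y)%Z by apply/negP => /max_e; rewrite ltnn.
by rewrite (omega_exact y_neq0 dvd_e ndvd_eS).
Qed.

Lemma omega_addl (x y : int) : y != 0 ->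
  (b ^+ (omega b y).+1 %| x)%Z -> omega b (x + y) = omega b y.
Proof.
move=> y_neq0 dvd_x; have [dvd_y ndvd_y] := dvdz_omega y_neq0.
move: (omega b y) dvd_x dvd_y ndvd_y => e dvd_x dvd_y ndvd_y.
apply: omega_exact; last by rewrite rpredDl.
  by apply: contraNneq ndvd_y => xy0; rewrite -(addKr x y) xy0 addr0 rpredN.
by rewrite rpredD // (dvdz_trans _ dvd_x) // dvdz_exp2l.
Qed.

Lemma coprimez_neq0 (a : int) : coprimez a b -> a != 0.
Proof. by apply: contraTneq => ->; rewrite /coprimez gcd0z eqz_nat gtn_eqF. Qed.

Lemma omega_mul_coprime (a c : int) (n : nat) : coprimez a b -> c != 0 ->
  omega b (c * a ^+ n) = omega b c.
Proof.
move=> cop c_neq0; have [dvd_c ndvd_c] := dvdz_omega c_neq0.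
have a_neq0 := coprimez_neq0 cop.
apply: omega_exact; first by rewrite mulf_neq0 ?expf_neq0.
  exact: dvdz_mulr.
by rewrite Gauss_dvdzl // coprimezXl // coprimez_sym coprimezXl.
Qed.

Lemma omega_mul_self (c : int) : c != 0 -> omega b (c * b) = (omega b c).+1.
Proof.
move=> c_neq0; have [dvd_c ndvd_c] := dvdz_omega c_neq0.
have b_neq0 : b != 0 by rewrite -absz_gt0 ltnW.
by apply: omega_exact; rewrite ?mulf_neq0 // exprSr dvdz_mul2r.
Qed.

End Omega.

Definition motzkin_term (N : nat) (a b : int) (k : nat) : int :=
  ('C(N, 2 * k))%:Z * (catalan k)%:Z * a ^+ k * b ^+ (N - 2 * k).

Lemma motzkinE (N : nat) (a b : int) :
  motzkin N a b = \sum_(k < N./2) motzkin_term N a b k + motzkin_term N a b N./2.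
Proof. by rewrite /motzkin big_ord_recr. Qed.

Lemma motzkin_term_even_top (n : nat) (a b : int) :
  motzkin_term (2 * n) a b n = (catalan n)%:Z * a ^+ n.
Proof. by rewrite /motzkin_term binn subnn expr0 mulr1 mul1r. Qed.

Lemma motzkin_term_odd_top (n : nat) (a b : int) :
  motzkin_term (2 * n).+1 a b n = ((2 * n).+1 * catalan n)%N%:Z * a ^+ n * b.
Proof. by rewrite /motzkin_term binSn subSnn expr1 PoszM. Qed.

Lemma dvdz_motzkin_term_even (n : nat) (a b : int) (e k : nat) : b != 0 -> (k < n)%N ->
  (b ^+ e %| (catalan n)%:Z)%Z -> (b ^+ e.+1 %| motzkin_term (2 * n) a b k)%Z.
Proof.
move=> b_neq0 lt_kn; rewrite /motzkin_term mulrAC => dvd_cat; apply: dvdz_mulr.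
move: dvd_cat; rewrite !dvdzE !abszX !abszM !abszX !absz_nat.
by apply: dvdn_motzkin_coef_even; rewrite // absz_gt0.
Qed.

Lemma dvdz_motzkin_term_odd (n : nat) (a b : int) (e k : nat) : b != 0 -> (k < n)%N ->
  (b ^+ e %| ((2 * n).+1 * catalan n)%N%:Z)%Z ->
  (b ^+ e.+2 %| motzkin_term (2 * n).+1 a b k)%Z.
Proof.
move=> b_neq0 lt_kn; rewrite /motzkin_term mulrAC => dvd_cat; apply: dvdz_mulr.
move: dvd_cat; rewrite !dvdzE !abszX !abszM !abszX !absz_nat.
by apply: dvdn_motzkin_coef_odd; rewrite // absz_gt0.
Qed.

Theorem theorem9 (n : nat) (a b : int) :
  gcdz a b = 1%N -> b != 0 -> b != 1 -> b != -1 ->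
  omega b (motzkin (2 * n) a b) = omega b (catalan n)%:Z /\
  omega b (motzkin (2 * n).+1 a b) = (1 + omega b (((2 * n).+1 * catalan n)%N)%:Z)%N.
Proof.
move=> gcd_ab b_neq0 b_neq1 b_neqN1.
have b_gt1 : (1 < `|b|)%N.
  by clear gcd_ab; move: b_neq0 b_neq1 b_neqN1; case: b => [[|[|m]]|[|m]].
have cop : coprimez a b by rewrite /coprimez gcd_ab.
have a_neq0 := coprimez_neq0 b_gt1 cop.
have half_even : (2 * n)./2 = n by rewrite mul2n doubleK.
have half_odd : (2 * n).+1./2 = n by rewrite mul2n /= uphalf_double.
set c := (catalan n)%:Z; set c' := ((2 * n).+1 * catalan n)%N%:Z.
have c_neq0 : c != 0 by rewrite eqz_nat -lt0n catalan_gt0.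
have c'_neq0 : c' != 0 by rewrite eqz_nat -lt0n muln_gt0 catalan_gt0.
split.
- rewrite motzkinE half_even motzkin_term_even_top.
  rewrite omega_addl ?omega_mul_coprime ?mulf_neq0 ?expf_neq0 //.
  apply: rpred_sum => k _; apply: dvdz_motzkin_term_even => //.
  by case: (dvdz_omega b_gt1 c_neq0).
- rewrite motzkinE half_odd motzkin_term_odd_top.
  rewrite omega_addl ?omega_mul_self ?omega_mul_coprime ?mulf_neq0 ?expf_neq0 //.
  apply: rpred_sum => k _; apply: dvdz_motzkin_term_odd => //.
  by case: (dvdz_omega b_gt1 c'_neq0).
Qed.
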